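(* Let $k\ge1$ and let $G$ be a finite $k$-connected graph with $\mathrm{Ent}(G)=k$. Then $G$ is an abstract $k$-molecule.
   Context: Graphs are finite and undirected. A graph is $k$-connected if one must remove at least $k$ vertices to disconnect it; the connectivity is the largest such $k$ (by convention the complete graph $K_m$, $m\ge3$, has connectivity $m-1$). $k$-molecule: for $k,h\ge1$, $B_k=\{b_1,\dots,b_k\}$ and a set $\mathcal B$ of edges among vertices of $B_k$, the $k$-molecule $\vartheta_{B_k}^{\mathcal B,h}$ has vertex set $B_k\cup\{v_1,\dots,v_h\}$ and edge set $\mathcal B\cup\{v_ib_j:1\le i\le h,1\le j\le k\}$, with the requirement $h\ge k-k'$ where $k'$ is the connectivity of the subgraph induced by $B_k$. A graph $G$ is an abstract $k$-molecule if there are $B\subseteq V_G$ with $|B|=k$, a $k$-molecule $\vartheta_{B_k}^{\mathcal B,h}$ and an isomorphism $G\to\vartheta_{B_k}^{\mathcal B,h}$ mapping $B$ onto $B_k$. Entanglement: in the game $\mathrm{Ent}(G,k)$ Thief plays against $k$ cops on $G$. Initially no cop is placed and Thief picks a vertex. Each round, Cops may do nothing, place a new cop (at most $k$ in total) on Thief's current vertex, or move a placed cop to Thief's current vertex; then Thief must move along an edge to an adjacent vertex not occupied by a cop, and is caught (Cops win) if he cannot. Infinite plays are won by Thief. $\mathrm{Ent}(G)$ is the least $k$ for which Cops have a winning strategy. *)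

(* Finite simple graphs are given by a finType T of vertices
   and an edge relation e : rel T (assumed symmetric and irreflexive). *)
From mathcomp Require Import all_boot.
Set Implicit Arguments. Unset Strict Implicit. Unset Printing Implicit Defensive.

Definition simple_graph (T : finType) (e : rel T) : Prop :=
  symmetric e /\ irreflexive e.

Definition del_rel (T : finType) (e : rel T) (S : {set T}) : rel T :=
  [rel a b | [&& a \notin S, b \notin S & e a b]].

(* k-connected (Diestel's convention, which gives K_m connectivity m-1):
   G has more than k vertices and G - S is connected whenever |S| < k. *)
Definition kconnected (T : finType) (e : rel T) (k : nat) : bool :=
  (k < #|T|) &&
  [forall S : {set T}, (#|S| < k) ==>
    [forall x, forall y,
       (x \notin S) ==> (y \notin S) ==> connect (del_rel e S) x y]].

Definition connectivity (T : finType) (e : rel T) : nat :=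
  \max_(j < #|T| | kconnected e j) j.

(* Vertex set B_k = inl 'I_k, the vertices v_1..v_h = inr 'I_h.
   Edges: Bedges among B_k, plus all v_i b_j. *)
Definition mol_rel (k h : nat) (Bedges : rel 'I_k) : rel ('I_k + 'I_h) :=
  fun x y => match x, y with
             | inl i, inl j => Bedges i j
             | inl _, inr _ => true
             | inr _, inl _ => true
             | inr _, inr _ => false
             end.

Definition is_inl (A B : Type) (x : A + B) : bool :=
  if x is inl _ then true else false.

Definition is_molecule_data (k h : nat) (Bedges : rel 'I_k) : Prop :=
  1 <= k /\ 1 <= h /\ simple_graph Bedges /\
  k - connectivity Bedges <= h.

Definition abstract_molecule (T : finType) (e : rel T) (k : nat) : Prop :=
  exists B : {set T}, #|B| = k /\
  exists (h : nat) (Bedges : rel 'I_k), is_molecule_data h Bedges /\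
  exists f : T -> 'I_k + 'I_h, bijective f /\
    (forall x y, e x y = mol_rel Bedges (f x) (f y)) /\
    (forall x, (x \in B) = is_inl (f x)).

(* Cops are labelled by 'I_k; a cop configuration assigns to each cop its
   vertex (None = not yet placed).  In each round, Cops either do nothing
   (None) or choose a cop i (Some i): if i is unplaced this places a new cop,
   otherwise it moves the placed cop i; in both cases cop i goes to Thief's
   current vertex.  A Cops strategy sees the whole history of Thief's
   positions v_0, ..., v_n (the cops' configuration is determined by it). *)
Definition cop_strategy (T : finType) (k : nat) := seq T -> option 'I_k.

(* configuration of cops before round n (i.e. after n cop moves),
   along the Thief sequence v *)
Fixpoint cop_conf (T : finType) (k : nat) (sigma : cop_strategy T k)
  (v : nat -> T) (n : nat) : 'I_k -> option T :=
  match n with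
  | 0 => fun _ => None
  | n'.+1 => fun i =>
      if sigma (mkseq v n'.+1) == Some i then Some (v n')
      else cop_conf sigma v n' i
  end.

(* v is an infinite play consistent with sigma: Thief starts at v 0 and in
   each round n moves along an edge from v n to v n.+1, a vertex not occupied
   by a cop after Cops' action of round n. *)
Definition thief_escapes (T : finType) (e : rel T) (k : nat)
  (sigma : cop_strategy T k) (v : nat -> T) : Prop :=
  forall n, e (v n) (v n.+1) /\
            forall i, cop_conf sigma v n.+1 i != Some (v n.+1).

(* Cops win Ent(G,k): a strategy such that every play is finite
   (a finite play ends with Thief unable to move, i.e. caught). *)
Definition cops_win (T : finType) (e : rel T) (k : nat) : Prop :=
  exists sigma : cop_strategy T k, forall v : nat -> T, ~ thief_escapes e sigma v.

Definition entanglement_is (T : finType) (e : rel T) (k : nat) : Prop :=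
  cops_win e k /\ forall j, j < k -> ~ cops_win e j.

From mathcomp Require Import all_boot.
From mathcomp Require Import zify.
From Stdlib Require Import Classical.

Set Implicit Arguments.
Unset Strict Implicit.
Unset Printing Implicit Defensive.

(* If G is k-connected but not a k-molecule, Thief escapes k cops forever.
   He keeps the invariant that his vertex has a cop-free neighbour: with cops
   on C, |C| <= k, and Thief on u, he moves to a free neighbour of u that itself
   has a free neighbour.  If there is none, u is occupied and its free
   neighbours see only C; k-connectivity of G - (C - u) then makes u adjacent
   to every vertex outside C, whose neighbourhoods are therefore exactly C.
   So |C| = k and G is the k-molecule with base C. *)

Lemma homo_connect (T1 T2 : finType) (r1 : rel T1) (r2 : rel T2) (g : T1 -> T2) :
  {homo g : a b / r1 a b >-> r2 a b} ->
  forall a b, connect r1 a b -> connect r2 (g a) (g b).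
Proof.
move=> g_homo a _ /connectP[p r1p ->]; apply/connectP.
exists (map g p); last by rewrite last_map.
exact: (homo_path g_homo).
Qed.

Lemma del_rel_sym (T : finType) (e : rel T) (S : {set T}) :
  symmetric e -> symmetric (del_rel e S).
Proof. by move=> esym a b; rewrite /del_rel /= esym andbCA. Qed.

Section KConnected.

Variables (T : finType) (e : rel T) (k : nat).
Hypothesis kconn : kconnected e k.

Lemma kconnected_card : k < #|T|.
Proof. by case/andP: kconn. Qed.

Lemma kconnected_connect {S : {set T}} {x y : T} :
  #|S| < k -> x \notin S -> y \notin S -> connect (del_rel e S) x y.
Proof.
move=> Sk xS yS; case/andP: kconn => _ /forallP/(_ S).
by rewrite Sk => /forallP/(_ x)/forallP/(_ y); rewrite xS yS.
Qed.

Lemma kconnected_nbhd_card (S : {set T}) x :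
  x \notin S -> (forall z, e x z -> z \in S) -> k <= #|S|.
Proof.
move=> xS nbhdS; rewrite leqNgt; apply/negP => Sk.
have only_x y : y \notin S -> y = x.
  move=> yS; case/connectP: (kconnected_connect Sk xS yS) => -[|z p] //=.
  by case/andP=> /and3P[_ zS /nbhdS]; rewrite (negbTE zS).
have : ~: S \subset [set x].
  by apply/subsetP => y; rewrite in_setC => /only_x ->; rewrite inE.
move/subset_leq_card; rewrite cards1.
have := cardsC S; have := kconnected_card; lia.
Qed.

Lemma kconnected_nbr x : 0 < k -> exists z, e x z.
Proof.
move=> k_gt0; case: (pickP (e x)) => [z exz | no_nbr]; first by exists z.
have nbhd0 z : e x z -> z \in set0 by rewrite no_nbr.
by have := kconnected_nbhd_card (negbT (in_set0 x)) nbhd0; rewrite cards0; lia.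
Qed.

Lemma kconnected_le_connectivity : k <= connectivity e.
Proof.
have kT := kconnected_card.
exact: (@leq_bigmax_cond _ (fun j : 'I_#|T| => kconnected e j) val (Ordinal kT)).
Qed.

End KConnected.

Section Cut.

Variables (T : finType) (e : rel T) (k : nat).
Hypotheses (e_sym : symmetric e) (e_irr : irreflexive e) (kconn : kconnected e k).

Variables (C : {set T}) (u : T).
Hypotheses (Ck : #|C| <= k) (uC : u \in C).
Hypothesis free_nbrs_trapped : forall y, e u y -> y \notin C -> {subset e y <= C}.

(* In G - (C - u), the vertex u and its neighbours outside C form a union of
   components; k-connectivity makes it everything. *)
Lemma outside_adjacent x : x \notin C -> e u x.
Proof.
move=> xC; have Sk : #|C :\ u| < k by move: (cardsD1 u C); rewrite uC; lia.
set S := C :\ u.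
have uS : u \notin S by rewrite !inE eqxx.
have xS : x \notin S by rewrite !inE (negbTE xC) andbF.
pose A : {pred T} := [pred a | (a == u) || e u a && (a \notin C)].
have A_closed : closed (del_rel e S) A.
  apply: intro_closed; first exact/sym_connect_sym/del_rel_sym.
  move=> a b /and3P[_ bS eab]; rewrite !inE.
  have bCu : b \in C -> b = u by move: bS; rewrite !inE => /nandP[/negPn/eqP|/negP].
  case/orP => [/eqP au | /andP[eua aC]].
    have [/bCu bu | bC] := boolP (b \in C); first by rewrite au bu e_irr in eab.
    by rewrite -au eab orbT.
  by rewrite (bCu (free_nbrs_trapped eua aC eab)) eqxx.
have := closed_connect A_closed (kconnected_connect kconn Sk uS xS).
by rewrite !inE eqxx /= => /esym/orP[/eqP xu|/andP[]//]; rewrite xu uC in xC.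
Qed.

Lemma outside_nbhd x : x \notin C -> forall z, e x z = (z \in C).
Proof.
move=> xC z; have nbhdC := free_nbrs_trapped (outside_adjacent xC) xC.
apply/idP/idP => [/nbhdC // | zC]; apply: contraT => exz.
have xCz : x \notin C :\ z by rewrite !inE (negbTE xC) andbF.
have : k <= #|C :\ z|.
  apply: (kconnected_nbhd_card kconn xCz) => y exy.
  by rewrite !inE nbhdC // andbT; apply: contraNneq exz => <-.
by move: (cardsD1 z C); rewrite zC; lia.
Qed.

Lemma cut_card : #|C| = k.
Proof.
have [x xC] : exists x, x \notin C.
  apply/existsP; rewrite -negb_forall; apply/forallP => allC.
  have : #|T| <= #|C| by apply/subset_leq_card/subsetP => y _; exact: allC.
  by have := kconnected_card kconn; lia.
have nbhdC z : e x z -> z \in C by rewrite (outside_nbhd xC).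
by have := kconnected_nbhd_card kconn xC nbhdC; lia.
Qed.

End Cut.

Definition induced (T : finType) (e : rel T) (C : {set T}) : rel 'I_#|C| :=
  fun i j => e (enum_val i) (enum_val j).
Arguments induced {T} e C.

Lemma simple_graph_induced (T : finType) (e : rel T) (C : {set T}) :
  simple_graph e -> simple_graph (induced e C).
Proof. by case=> e_sym e_irr; split=> [i j | i]; [exact: e_sym | exact: e_irr]. Qed.

(* Deleting S from G[C] is deleting its image together with ~: C from G. *)
Lemma kconnected_induced (T : finType) (e : rel T) (k j : nat) (C : {set T}) :
  kconnected e k -> j + #|~: C| <= k -> j < #|C| -> kconnected (induced e C) j.
Proof.
move=> kconn jk jC; apply/andP; split; first by rewrite card_ord.
have [c0 c0C] : exists c0, c0 \in C by apply/card_gt0P; lia.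
apply/forallP => S; apply/implyP => Sj.
apply/forallP => i; apply/forallP => i'; apply/implyP => iS; apply/implyP => i'S.
pose S' := enum_val @: S :|: ~: C.
have S'k : #|S'| < k.
  apply: leq_ltn_trans (leq_card_setU _ _) _.
  apply: leq_ltn_trans (leq_add (leq_imset_card _ _) (leqnn _)) _.
  by apply: leq_trans jk; rewrite ltn_add2r.
have val_notin l : l \notin S -> enum_val l \notin S'.
  move=> lS; rewrite !inE negb_or negbK enum_valP andbT.
  by apply: contra lS => /imsetP[l' l'S /enum_val_inj ->].
have rank_notin c : c \notin S' -> (c \in C) && (enum_rank_in c0C c \notin S).
  rewrite !inE negb_or negbK => /andP[cS cC]; rewrite cC.
  by apply: contra cS => cS; apply/imsetP; exists (enum_rank_in c0C c); rewrite ?enum_rankK_in.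
have rank_homo :
    {homo enum_rank_in c0C : a b / del_rel e S' a b >-> del_rel (induced e C) S a b}.
  move=> a b /and3P[/rank_notin/andP[aC aS] /rank_notin/andP[bC bS] eab].
  by rewrite /del_rel /= aS bS /induced !enum_rankK_in.
have := kconnected_connect kconn S'k (val_notin _ iS) (val_notin _ i'S).
by move/(homo_connect rank_homo); rewrite !enum_valK_in.
Qed.

Lemma molecule_data_induced (T : finType) (e : rel T) (C : {set T}) :
  simple_graph e -> kconnected e #|C| -> 0 < #|C| -> 0 < #|~: C| ->
  is_molecule_data #|~: C| (induced e C).
Proof.
move=> sg kconn C0 C'0; split=> //; split=> //; split; first exact: simple_graph_induced.
case: (leqP #|C| #|~: C|) => [|lt_hC]; first by lia.
have kconn_ind : kconnected (induced e C) (#|C| - #|~: C|).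
  by apply: kconnected_induced kconn _ _; lia.
by have := kconnected_le_connectivity kconn_ind; lia.
Qed.

Lemma molecule_of_cut (T : finType) (e : rel T) (C : {set T}) :
  simple_graph e -> 0 < #|C| -> kconnected e #|C| ->
  (forall x, x \notin C -> forall z, e x z = (z \in C)) -> abstract_molecule e #|C|.
Proof.
move=> sg C0 kconn outside_nbhd; have [e_sym _] := sg.
have [c0 c0C] := card_gt0P C0.
have C'0 : 0 < #|~: C| by have := cardsC C; have := kconnected_card kconn; lia.
have [x1 x1C] := card_gt0P C'0.
pose f x : 'I_#|C| + 'I_#|~: C| :=
  if x \in C then inl (enum_rank_in c0C x) else inr (enum_rank_in x1C x).
have f_inl x : (x \in C) = is_inl (f x) by rewrite /f; case: (x \in C).
have f_bij : bijective f.
  exists (fun s : 'I_#|C| + 'I_#|~: C| =>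
            match s with inl i => enum_val i | inr j => enum_val j end).
    by move=> x; rewrite /f; case: ifP => xC; rewrite enum_rankK_in // inE xC.
  case=> i; rewrite /f; first by rewrite enum_valP enum_valK_in.
  by move: (enum_valP i); rewrite inE => /negbTE ->; rewrite enum_valK_in.
exists C; split=> //; exists #|~: C|, (induced e C).
split; first exact: molecule_data_induced.
exists f; split=> //; split=> // x y; rewrite /f.
case xC: (x \in C); case yC: (y \in C) => /=.
- by rewrite /induced !enum_rankK_in.
- by rewrite e_sym outside_nbhd ?yC.
- by rewrite outside_nbhd ?xC.
- by rewrite outside_nbhd ?xC.
Qed.

Definition has_free_nbr (T : finType) (e : rel T) (C : {set T}) (u : T) : bool :=
  [exists z, e u z && (z \notin C)].

Lemma safe_move_or_molecule (T : finType) (e : rel T) (k : nat) (C : {set T}) u :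
  simple_graph e -> kconnected e k -> #|C| <= k -> has_free_nbr e C u ->
  [exists y, [&& e u y, y \notin C & has_free_nbr e C y]] \/ abstract_molecule e k.
Proof.
move=> sg kconn Ck /existsP[z /andP[euz zC]]; have [e_sym e_irr] := sg.
case: (boolP [exists y, _]) => [|stuck]; [by left | right].
have trapped y : e u y -> y \notin C -> {subset e y <= C}.
  move=> euy yC w; rewrite unfold_in => eyw; apply: contraT => wC.
  case/negP: stuck; apply/existsP; exists y.
  by rewrite euy yC; apply/existsP; exists w; rewrite eyw wC.
have uC : u \in C by apply: (trapped z) => //; rewrite unfold_in e_sym.
have C_eq_k := cut_card e_sym e_irr kconn Ck uC trapped.
rewrite -C_eq_k; apply: molecule_of_cut => //.
- by apply/card_gt0P; exists u.
- by rewrite C_eq_k.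
- by move=> x; apply: (outside_nbhd e_sym e_irr kconn Ck uC trapped).
Qed.

Definition occupied (T : finType) (k : nat) (c : 'I_k -> option T) : {set T} :=
  [set x | [exists i, c i == Some x]].

Lemma card_occupied (T : finType) (k : nat) (c : 'I_k -> option T) :
  #|occupied c| <= k.
Proof.
have sub : Some @: occupied c \subset [set c i | i : 'I_k].
  apply/subsetP => y /imsetP[x]; rewrite inE => /existsP[i /eqP ci] ->.
  by apply/imsetP; exists i.
rewrite -(card_imset _ (@Some_inj _)).
apply: leq_trans (subset_leq_card sub) _.
by apply: leq_trans (leq_imset_card _ _) _; rewrite card_ord.
Qed.

Section ThiefStrategy.

Variables (T : finType) (e : rel T) (k : nat).
Hypothesis e_irr : irreflexive e.
Hypothesis safe_move : forall (C : {set T}) u, #|C| <= k -> has_free_nbr e C u ->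
  [exists y, [&& e u y, y \notin C & has_free_nbr e C y]].
Variables (sigma : cop_strategy T k) (x0 : T).
Hypothesis x0_free : has_free_nbr e set0 x0.

Definition cop_move (h : seq T) (c : 'I_k -> option T) : 'I_k -> option T :=
  fun i => if sigma h == Some i then Some (last x0 h) else c i.

Definition thief_move (C : {set T}) (u : T) : T :=
  odflt u [pick y | [&& e u y, y \notin C & has_free_nbr e C y]].

(* Thief's positions up to round n, and the cops' configuration before the
   cops act in round n. *)
Fixpoint thief_state (n : nat) : seq T * ('I_k -> option T) :=
  if n is n'.+1 then
    let: (h, c) := thief_state n' in
    let c' := cop_move h c in (rcons h (thief_move (occupied c') (last x0 h)), c')
  else ([:: x0], fun _ => None).

Definition thief_play (n : nat) : T := last x0 (thief_state n).1.

Lemma thief_history n : (thief_state n).1 = mkseq thief_play n.+1.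
Proof.
elim: n => [|n IHn] //; rewrite mkseqS -IHn /thief_play /=.
by case: (thief_state n) => h c; rewrite last_rcons.
Qed.

Lemma thief_cops n i : (thief_state n).2 i = cop_conf sigma thief_play n i.
Proof.
elim: n i => [|n IHn] i //=; rewrite -thief_history -IHn /thief_play.
by case: (thief_state n) => h c.
Qed.

Lemma thief_move_safe (C : {set T}) u : #|C| <= k -> has_free_nbr e C u ->
  [&& e u (thief_move C u), thief_move C u \notin C & has_free_nbr e C (thief_move C u)].
Proof.
move=> Ck /(safe_move Ck) /existsP[y safe_y]; rewrite /thief_move.
by case: pickP => [z //| no_safe]; rewrite no_safe in safe_y.
Qed.

Lemma occupied_cop_move h c : occupied (cop_move h c) \subset last x0 h |: occupied c.
Proof.
apply/subsetP => x; rewrite !inE => /existsP[i]; rewrite /cop_move.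
case: ifP => _ /eqP; first by case=> ->; rewrite eqxx.
by move=> ci; apply/orP; right; apply/existsP; exists i; rewrite ci.
Qed.

(* A free neighbour of Thief stays free: the only new cop lands on Thief. *)
Lemma free_nbr_cop_move h c :
  has_free_nbr e (occupied c) (last x0 h) ->
  has_free_nbr e (occupied (cop_move h c)) (last x0 h).
Proof.
case/existsP => z /andP[uz zC]; apply/existsP; exists z; rewrite uz.
apply: contra zC => /(subsetP (occupied_cop_move h c)); rewrite !inE.
by case/orP => [/eqP zu | //]; rewrite zu e_irr in uz.
Qed.

Lemma thief_step n :
  has_free_nbr e (occupied (thief_state n).2) (thief_play n) ->
  [&& e (thief_play n) (thief_play n.+1),
      thief_play n.+1 \notin occupied (thief_state n.+1).2 &
      has_free_nbr e (occupied (thief_state n.+1).2) (thief_play n.+1)].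
Proof.
rewrite /thief_play /=; case: (thief_state n) => h c /= free_u; rewrite last_rcons.
exact: thief_move_safe (card_occupied _) (free_nbr_cop_move free_u).
Qed.

Lemma thief_free n : has_free_nbr e (occupied (thief_state n).2) (thief_play n).
Proof.
elim: n => [|n /thief_step/and3P[//]].
by rewrite (_ : occupied _ = set0) //; apply/setP => x; rewrite !inE; apply/existsP => -[].
Qed.

Lemma thief_escapes_play : thief_escapes e sigma thief_play.
Proof.
move=> n; have /and3P[e_step safe_next _] := thief_step (thief_free n).
split=> // i; apply: contraNneq safe_next => cop_i.
by rewrite inE; apply/existsP; exists i; rewrite thief_cops cop_i.
Qed.

End ThiefStrategy.

Theorem mainTheorem4 (T : finType) (e : rel T) (k : nat) :
  simple_graph e -> 1 <= k -> kconnected e k -> entanglement_is e k ->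
  abstract_molecule e k.
Proof.
move=> sg k_gt0 kconn [[sigma sigma_wins] _]; apply: NNPP => not_molecule.
have safe_move (C : {set T}) u : #|C| <= k -> has_free_nbr e C u ->
    [exists y, [&& e u y, y \notin C & has_free_nbr e C y]].
  by move=> Ck free_u; case: (safe_move_or_molecule sg kconn Ck free_u).
have [x0 _] : exists x0, x0 \in T by apply/card_gt0P/(leq_ltn_trans _ (kconnected_card kconn)).
have [z x0z] := kconnected_nbr kconn x0 k_gt0.
have x0_free : has_free_nbr e set0 x0 by apply/existsP; exists z; rewrite x0z inE.
exact: sigma_wins _ (thief_escapes_play sg.2 safe_move sigma x0_free).
Qed.
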